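(* Let $k\ge1$ be an integer, $G=(V,E)$ a $k$-perfectly orientable graph with certifying orientation $H$, and $Q$ the polytope \[ Q=\Big\{x\in[0,1]^V:\ x_v+\sum_{u\in N^+_H(v)}x_u\le k\ \text{ for all } v\in V\Big\}. \] For each $b\in[0,1]$: there is a deterministic, oblivious, monotone $(b/k,\,1-b)$-balanced contention resolution scheme for $Q$ (with respect to the independent sets of $G$), and there is a randomized monotone $(b/k,\,e^{-b})$-balanced contention resolution scheme for $Q$.
   Context: $\mathcal{I}$ denotes the family of independent sets of $G$; $\alpha(G')$ is the maximum size of an independent set of a graph $G'$. $G$ is $k$-perfectly orientable if there is an orientation $H=(V,A)$ of $G$ with $\alpha(G[N^+_H(v)])\le k$ for all $v$, where $N^+_H(v)=\{u:(v,u)\in A\}$. For $x\in[0,1]^V$, $R(x)$ denotes a random subset of $V$ containing each $v$ independently with probability $x_v$, and $\mathrm{support}(x)=\{v:x_v>0\}$; for $b\in[0,1]$, $bQ=\{bx:x\in Q\}$. For $b,c\in[0,1]$, a $(b,c)$-balanced contention resolution (CR) scheme $\pi$ for $Q$ is a procedure that for every $x\in bQ$ and $A\subseteq V$ returns a (possibly random) set $\pi_x(A)\subseteq A\cap\mathrm{support}(x)$ such that (i) $\pi_x(A)\in\mathcal{I}$ with probability 1 for all $A\subseteq V$, $x\in bQ$, and (ii) for all $x\in bQ$ and all $i\in\mathrm{support}(x)$, $\Pr[i\in\pi_x(R(x))\mid i\in R(x)]\ge c$. The scheme is monotone if $\Pr[i\in\pi_x(A_1)]\ge\Pr[i\in\pi_x(A_2)]$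 whenever $i\in A_1\subseteq A_2$; deterministic if $\pi$ is a deterministic algorithm; oblivious if it is deterministic and $\pi_x(A)=\pi_y(A)$ for all $x,y,A$. *)

From HB Require Import structures.
From mathcomp Require Import all_boot all_order all_algebra.
From mathcomp Require Import reals sequences exp.
Set Implicit Arguments. Unset Strict Implicit. Unset Printing Implicit Defensive.
Import Order.TTheory GRing.Theory Num.Theory.
Local Open Scope ring_scope.

Section Defs.
Variables (V : finType).

Definition simple_graph (e : rel V) : Prop :=
  (forall u v, e u v = e v u) /\ (forall v, ~~ e v v).

Definition orientation (e a : rel V) : Prop :=
  (forall u v, a u v -> e u v) /\ (forall u v, e u v -> a u v != a v u).

Definition independent (e : rel V) (S : {set V}) : bool :=
  [forall u in S, forall v in S, ~~ e u v].

Definition alpha_induced (e : rel V) (N : {set V}) : nat :=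
  \max_(S : {set V} | (S \subset N) && independent e S) #|S|.

Definition Nout (a : rel V) (v : V) : {set V} := [set u | a v u].

Definition certifying_orientation (e a : rel V) (k : nat) : Prop :=
  orientation e a /\ forall v, (alpha_induced e (Nout a v) <= k)%N.

Variable R : realType.

Definition polyQ (a : rel V) (k : nat) (x : V -> R) : Prop :=
  (forall v, 0 <= x v <= 1) /\
  (forall v, x v + \sum_(u in Nout a v) x u <= k%:R).

Definition scaleP (b : R) (P : (V -> R) -> Prop) (x : V -> R) : Prop :=
  exists y, P y /\ forall v, x v = b * y v.

Definition support (x : V -> R) : {set V} := [set v | 0 < x v].

(* Pr[R(x) = A] *)
Definition probR (x : V -> R) (A : {set V}) : R :=
  (\prod_(v in A) x v) * \prod_(v in ~: A) (1 - x v).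

(* A (possibly randomized) scheme: pi x A S = Pr[pi_x(A) = S]. *)
Definition scheme := (V -> R) -> {set V} -> {set V} -> R.

Definition prIn (pi : scheme) (x : V -> R) (A : {set V}) (i : V) : R :=
  \sum_(S : {set V} | i \in S) pi x A S.

Definition balanced_CR (e : rel V) (P : (V -> R) -> Prop) (b c : R)
    (pi : scheme) : Prop :=
  (forall x A, scaleP b P x ->
     (forall S, 0 <= pi x A S) /\ \sum_(S : {set V}) pi x A S = 1) /\
  (forall x A S, scaleP b P x -> pi x A S != 0 ->
     (S \subset A :&: support x) && independent e S) /\
  (* Pr[i \in pi_x(R(x)) | i \in R(x)] >= c *)
  (forall x i, scaleP b P x -> i \in support x ->
     (\sum_(A : {set V} | i \in A) probR x A * prIn pi x A i) / x i >= c).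

Definition monotone_scheme (b : R) (P : (V -> R) -> Prop) (pi : scheme) : Prop :=
  forall x (A1 A2 : {set V}) i, scaleP b P x -> i \in A1 -> A1 \subset A2 ->
    prIn pi x A1 i >= prIn pi x A2 i.

Definition deterministic_scheme (b : R) (P : (V -> R) -> Prop) (pi : scheme) : Prop :=
  forall x A, scaleP b P x ->
    exists T : {set V}, forall S, pi x A S = (S == T)%:R.

Definition oblivious_scheme (b : R) (P : (V -> R) -> Prop) (pi : scheme) : Prop :=
  deterministic_scheme b P pi /\
  forall x y (A : {set V}), scaleP b P x -> scaleP b P y ->
    A \subset support x -> A \subset support y -> pi x A =1 pi y A.

End Defs.

(* Mark every element v of A with x_v > 0 independently with probability
   mu(x_v), and return the marked elements none of whose out-neighbours in H is
   marked.  Every edge of G is oriented, so of two adjacent marked elements one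
   is an out-neighbour of the other: the output is independent.  Shrinking A only
   unmarks elements, which helps the survivors: the scheme is monotone.  Marking
   the elements of R(x) with probabilities mu(x_v) yields R(x mu), hence i in
   R(x) survives with probability mu(x_i) prod_(u in N+(i)) (1 - x_u mu(x_u)),
   while x_i + sum_(u in N+(i)) x_u <= b on (b/k)Q.  For mu = 1 the scheme is
   deterministic and oblivious, and the product is at least
   1 - sum_u x_u >= 1 - b.  For mu(t) = (1 - e^-t)/t the product is
   e^(-sum_u x_u) >= e^(x_i - b), and mu(t) e^t = (e^t - 1)/t >= 1. *)

From Pilot Require Import Defs.
From HB Require Import structures.
From mathcomp Require Import all_boot all_order all_algebra.
From mathcomp Require Import reals sequences exp.
From mathcomp Require Import lra.
Import Order.TTheory GRing.Theory Num.Theory.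
Local Open Scope ring_scope.
Set Implicit Arguments. Unset Strict Implicit.

Section RandomSubset.
Variables (R : realType) (V : finType).
Implicit Types (p r : V -> R) (A M : {set V}).

Lemma probRE p A : probR p A = \prod_v (if v \in A then p v else 1 - p v).
Proof.
rewrite /probR [RHS](bigID (mem A)) /=; congr (_ * _).
  by apply: eq_bigr => v ->.
by apply: eq_big => v; rewrite inE // => /negbTE ->.
Qed.

Lemma probR_ge0 p A : (forall v, 0 <= p v <= 1) -> 0 <= probR p A.
Proof.
move=> p01; rewrite probRE; apply: prodr_ge0 => v _.
by have /andP[p0 p1] := p01 v; case: ifP; rewrite ?subr_ge0.
Qed.

Lemma expect_probR_prod p (f : V -> bool -> R) :
  \sum_A probR p A * \prod_v f v (v \in A) =
  \prod_v (p v * f v true + (1 - p v) * f v false).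
Proof.
rewrite bigA_distr; apply: eq_bigr => A _.
by rewrite probRE -big_split; apply: eq_bigr => v _; case: ifP.
Qed.

Lemma sum_probR p : \sum_A probR p A = 1.
Proof.
have := expect_probR_prod p (fun _ _ => 1).
rewrite /= big1_eq; under eq_bigr do rewrite mulr1.
by move=> ->; apply: big1 => v _; rewrite !mulr1 addrC subrK.
Qed.

Lemma probR_neq0_subset p A : probR p A != 0 -> A \subset [set v | p v != 0].
Proof.
move=> nz; apply/subsetP => v vA; rewrite inE; apply: contraNneq nz => pv0.
by rewrite probRE (bigD1 v) //= vA pv0 mul0r.
Qed.

Lemma probR_indicator (D : {set V}) p A :
  (forall v, p v = (v \in D)%:R) -> probR p A = (A == D)%:R.
Proof.
move=> pD; have [->|AD] := eqVneq A D.
  by rewrite probRE big1 // => v _; rewrite pD; case: (v \in D); rewrite /= ?subr0.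
have /existsP[v vAD] : [exists v, (v \in A) != (v \in D)].
  apply: contraNT AD => /existsPn vAD; apply/eqP/setP => v.
  exact/eqP/negPn.
rewrite probRE (bigD1 v) //= pD.
by move: vAD; case: (v \in A); case: (v \in D); rewrite //= ?subrr mul0r.
Qed.

Definition restrict r A : V -> R := fun v => if v \in A then r v else 0.

Lemma sum_probR_restrict p r M :
  \sum_A probR p A * probR (restrict r A) M = probR (fun v => p v * r v) M.
Proof.
pose f v b := if v \in M then (if b then r v else 0) else (if b then 1 - r v else 1).
transitivity (\sum_A probR p A * \prod_v f v (v \in A)).
  apply: eq_bigr => A _; rewrite [probR _ M]probRE /f /restrict; congr (_ * _).
  by apply: eq_bigr => v _; case: (v \in M); case: (v \in A); rewrite ?subr0.
rewrite expect_probR_prod probRE; apply: eq_bigr => v _; rewrite /f.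
case: ifP => _; lra.
Qed.

End RandomSubset.

Section Sinks.
Variables (V : finType) (a : rel V).

Definition sinks (M : {set V}) : {set V} :=
  [set i in M | [forall u, a i u ==> (u \notin M)]].

Lemma sinks_subset M : sinks M \subset M.
Proof. by apply/subsetP => i; rewrite inE => /andP[]. Qed.

Lemma independent_sinks e M : orientation e a -> independent e (sinks M).
Proof.
move=> [_ a_or]; apply/forall_inP => u uS; apply/forall_inP => v vS.
apply/negP => /a_or; move: uS vS.
rewrite !inE => /andP[uM /forallP uout] /andP[vM /forallP vout].
case auv: (a u v); first by move: (uout v); rewrite auv vM.
by case avu: (a v u) => //; move: (vout u); rewrite avu uM.
Qed.

Hypothesis a_irr : forall v, ~~ a v v.

Lemma sinks_indicator (R : realType) i M :
  (i \in sinks M)%:R = \prod_v (if v == i then (v \in M)%:R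
                                else if a i v then (v \notin M)%:R else 1) :> R.
Proof.
have [iS|iNS] := boolP (i \in sinks M).
  move: (iS); rewrite inE => /andP[iM /forallP iout].
  symmetry; apply: big1 => v _; case: eqP => [->|_]; first by rewrite iM.
  by case: ifP => // aiv; move: (iout v); rewrite aiv => /= ->.
move: iNS; rewrite inE negb_and => /orP[iNM|/forallPn[u]].
  by rewrite (bigD1 i) //= eqxx (negbTE iNM) mul0r.
rewrite negb_imply negbK => /andP[aiu uM].
have ui : u != i by apply: contraTneq aiu => ->; exact: a_irr.
by rewrite (bigD1 u) //= (negbTE ui) aiu uM mul0r.
Qed.

Lemma probR_sinks (R : realType) (p : V -> R) i :
  \sum_M probR p M * (i \in sinks M)%:R = p i * \prod_(v | a i v) (1 - p v).
Proof.
pose f v (b : bool) : R := if v == i then b%:R else if a i v then (~~ b)%:R else 1.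
transitivity (\sum_M probR p M * \prod_v f v (v \in M)).
  by apply: eq_bigr => M _; rewrite sinks_indicator.
rewrite expect_probR_prod (bigD1 i) //= /f eqxx mulr1 mulr0 addr0; congr (_ * _).
rewrite [RHS]big_mkcond [RHS](bigD1 i) //= (negbTE (a_irr i)) mul1r.
apply: eq_bigr => v /negbTE ->.
by case: ifP => _ /=; rewrite ?mulr1 ?mulr0 ?add0r // addrC subrK.
Qed.

End Sinks.

Section SinkScheme.
Variables (R : realType) (V : finType) (a : rel V) (mu : R -> R).
Implicit Types (x : V -> R) (A M S : {set V}).

Definition mark x v : R := if 0 < x v then mu (x v) else 0.

Definition sink_scheme : scheme V R :=
  fun x A S => \sum_M probR (restrict (mark x) A) M * (S == sinks a M)%:R.

Lemma mulr_mark x v : 0 <= x v -> x v * mark x v = x v * mu (x v).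
Proof.
by rewrite /mark le_eqVlt => /orP[/eqP <-|->]; rewrite ?ltxx ?mul0r.
Qed.

Hypothesis mu01 : forall t, 0 < t -> 0 <= mu t <= 1.

Lemma restrict_mark01 x A v : 0 <= restrict (mark x) A v <= 1.
Proof.
rewrite /restrict /mark; case: ifP => _; last by rewrite lexx ler01.
by case: ifP => [/mu01 //|_]; rewrite lexx ler01.
Qed.

Lemma sink_scheme_ge0 x A S : 0 <= sink_scheme x A S.
Proof.
apply: sumr_ge0 => M _; apply: mulr_ge0 (ler0n _ _).
exact/probR_ge0/restrict_mark01.
Qed.

Lemma sum_sink_scheme x A : \sum_S sink_scheme x A S = 1.
Proof.
rewrite /sink_scheme exchange_big /= -[RHS](sum_probR (restrict (mark x) A)).
apply: eq_bigr => M _; rewrite -mulr_sumr (bigD1 (sinks a M)) //= eqxx big1 ?addr0 ?mulr1 //.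
by move=> S /negbTE ->.
Qed.

Lemma sink_scheme_neq0 e x A S : orientation e a -> sink_scheme x A S != 0 ->
  (S \subset A :&: Defs.support x) && independent e S.
Proof.
move=> ori /eqP nz.
have [M /andP[_ pos]] := psumr_neq0P
  (fun M _ => mulr_ge0 (probR_ge0 M (restrict_mark01 x A)) (ler0n _ _)) nz.
have /eqP SM : S == sinks a M by apply: contraTT pos => /negbTE ->; rewrite mulr0 ltxx.
have /probR_neq0_subset MD : probR (restrict (mark x) A) M != 0.
  by apply: contraTneq pos => ->; rewrite mul0r ltxx.
rewrite SM independent_sinks // andbT; apply: subset_trans (sinks_subset a M) _.
apply: subset_trans MD _; apply/subsetP => v; rewrite !inE /restrict /mark.
by case: (v \in A); case: (0 < x v); rewrite ?eqxx.
Qed.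

Lemma prIn_sink_schemeE x A i :
  prIn sink_scheme x A i = \sum_M probR (restrict (mark x) A) M * (i \in sinks a M)%:R.
Proof.
rewrite /prIn /sink_scheme exchange_big /=; apply: eq_bigr => M _.
rewrite -mulr_sumr big_mkcond (bigD1 (sinks a M)) //= eqxx big1 ?addr0.
  by case: ifP.
by move=> S /negbTE ->; case: ifP.
Qed.

Hypothesis a_irr : forall v, ~~ a v v.

Lemma prIn_sink_scheme x A i : prIn sink_scheme x A i =
  restrict (mark x) A i * \prod_(v | a i v) (1 - restrict (mark x) A v).
Proof. by rewrite prIn_sink_schemeE (probR_sinks a_irr). Qed.

Lemma sink_scheme_monotone b P : monotone_scheme b P sink_scheme.
Proof.
move=> x A1 A2 i _ iA1 A12; rewrite !prIn_sink_scheme.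
have q12 v : restrict (mark x) A1 v <= restrict (mark x) A2 v.
  rewrite {1}/restrict; case: ifP => [vA1|_]; first by rewrite /restrict (subsetP A12 v vA1).
  by case/andP: (restrict_mark01 x A2 v).
have -> : restrict (mark x) A2 i = restrict (mark x) A1 i.
  by rewrite /restrict iA1 (subsetP A12).
apply: ler_wpM2l; first by case/andP: (restrict_mark01 x A1 i).
apply: ler_prod => v _; apply/andP; split; last exact: lerB (lexx 1) (q12 v).
by rewrite subr_ge0; case/andP: (restrict_mark01 x A2 v).
Qed.

Lemma sink_scheme_survival x i : (forall v, 0 <= x v) -> i \in Defs.support x ->
  (\sum_(A : {set V} | i \in A) probR x A * prIn sink_scheme x A i) / x i =
  mu (x i) * \prod_(v | a i v) (1 - x v * mu (x v)).
Proof.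
move=> x0; rewrite inE => xi0.
have -> : \sum_(A : {set V} | i \in A) probR x A * prIn sink_scheme x A i =
          \sum_A probR x A * prIn sink_scheme x A i.
  rewrite [RHS](bigID (fun A => i \in A)) /= [X in _ + X]big1 ?addr0 //.
  by move=> A /negbTE iNA; rewrite prIn_sink_scheme /restrict iNA !mul0r mulr0.
have -> : \sum_A probR x A * prIn sink_scheme x A i =
          \sum_M probR (fun v => x v * mark x v) M * (i \in sinks a M)%:R.
  under eq_bigr => A _ do rewrite prIn_sink_schemeE mulr_sumr.
  rewrite exchange_big; apply: eq_bigr => M _ /=.
  by rewrite -sum_probR_restrict mulr_suml; apply: eq_bigr => A _; rewrite mulrA.
rewrite (probR_sinks a_irr) /= mulr_mark // mulrAC [x i * _]mulrC mulfK ?gt_eqF //.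
congr (_ * _).
by apply: eq_bigr => v _; rewrite mulr_mark.
Qed.

Lemma sink_scheme_balanced e b c P : orientation e a ->
  (forall x, scaleP b P x -> forall v, 0 <= x v) ->
  (forall x i, scaleP b P x -> i \in Defs.support x ->
     c <= mu (x i) * \prod_(v | a i v) (1 - x v * mu (x v))) ->
  balanced_CR e P b c sink_scheme.
Proof.
move=> ori Px0 Pc; split; [|split].
- by move=> x A _; split; [exact: sink_scheme_ge0 | exact: sum_sink_scheme].
- by move=> x A S _; apply: sink_scheme_neq0.
- by move=> x i Px iS; rewrite sink_scheme_survival ?Pc //; apply: Px0.
Qed.

End SinkScheme.

Section DeterministicScheme.
Variables (R : realType) (V : finType) (a : rel V).

Lemma sink_scheme1E (x : V -> R) A S :
  sink_scheme a (fun _ : R => 1) x A S = (S == sinks a (A :&: Defs.support x))%:R.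
Proof.
set D := A :&: Defs.support x.
have markD v : restrict (mark (fun _ : R => 1) x) A v = (v \in D)%:R.
  by rewrite /restrict /mark !inE; case: (v \in A); case: (0 < x v).
rewrite /sink_scheme (bigD1 D) //= (probR_indicator _ markD) eqxx mul1r big1 ?addr0 //.
by move=> M /negbTE MD; rewrite (probR_indicator _ markD) MD mul0r.
Qed.

Lemma sink_scheme1_deterministic b P :
  deterministic_scheme b P (sink_scheme a (fun _ : R => 1)).
Proof.
by move=> x A _; exists (sinks a (A :&: Defs.support x)) => S; rewrite sink_scheme1E.
Qed.

Lemma sink_scheme1_oblivious b P :
  oblivious_scheme b P (sink_scheme a (fun _ : R => 1)).
Proof.
split; first exact: sink_scheme1_deterministic.
by move=> x y A _ _ Ax Ay S; rewrite !sink_scheme1E (setIidPl Ax) (setIidPl Ay).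
Qed.

End DeterministicScheme.

Section Bounds.
Variable R : realType.

Lemma one_sub_sum_le_prod (I : Type) (r : seq I) (P : pred I) (x : I -> R) :
  (forall v, 0 <= x v <= 1) ->
  1 - \sum_(v <- r | P v) x v <= \prod_(v <- r | P v) (1 - x v).
Proof.
move=> x01; elim: r => [|u r IH]; first by rewrite !big_nil subr0.
rewrite !big_cons; case: (P u) => //.
have S0 : 0 <= \sum_(v <- r | P v) x v by apply: sumr_ge0 => v _; case/andP: (x01 v).
have /andP[xu0 xu1] := x01 u.
set S := \sum_(v <- r | P v) x v in S0 IH *.
set Pr := \prod_(v <- r | P v) (1 - x v) in IH *.
nra.
Qed.

Definition exp_mark (t : R) : R := (1 - expR (- t)) / t.

Lemma mul_exp_mark t : t * exp_mark t = 1 - expR (- t).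
Proof.
have [->|t0] := eqVneq t 0; first by rewrite mul0r oppr0 expR0 subrr.
by rewrite /exp_mark mulrC divfK.
Qed.

Lemma exp_mark01 t : 0 < t -> 0 <= exp_mark t <= 1.
Proof.
move=> t0; rewrite /exp_mark divr_ge0 ?(ltW t0) //=; last first.
  by rewrite subr_ge0 expR_le1 oppr_le0 ltW.
rewrite ler_pdivrMr // mul1r.
by have := expR_ge1Dx (- t); lra.
Qed.

Lemma expR_le_exp_mark t s b : 0 < t -> t + s <= b ->
  expR (- b) <= exp_mark t * expR (- s).
Proof.
move=> t0 tsb; have m0 : 0 <= exp_mark t by case/andP: (exp_mark01 t0).
have e1 : 1 <= exp_mark t * expR t.
  rewrite /exp_mark mulrAC mulrBl mul1r -expRD addNr expR0 ler_pdivlMr // mul1r.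
  by have := expR_ge1Dx t; lra.
apply: (le_trans _ (ler_wpM2l m0 (_ : expR (t - b) <= expR (- s)))).
  by rewrite expRD mulrA -[X in X <= _]mul1r ler_wpM2r ?expR_ge0.
by rewrite ler_expR; lra.
Qed.

End Bounds.

Lemma orientation_irr (V : finType) (e a : rel V) : orientation e a -> forall v, ~~ a v v.
Proof. by move=> [ae a_or] v; apply/negP => /[dup] /ae /a_or; rewrite eqxx. Qed.

Lemma scaled_polyQ (R : realType) (V : finType) (a : rel V) (k : nat) (b : R) (x : V -> R) :
  (1 <= k)%N -> 0 <= b <= 1 -> scaleP (b / k%:R) (polyQ a k) x ->
  (forall v, 0 <= x v <= 1) /\ (forall v, x v + \sum_(u | a v u) x u <= b).
Proof.
move=> k1 /andP[b0 b1] [y [[y01 ysum] xE]].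
have k0 : 0 < k%:R :> R by rewrite ltr0n.
have c0 : 0 <= b / k%:R by rewrite divr_ge0 // ltW.
have c1 : b / k%:R <= 1 by rewrite ler_pdivrMr // mul1r (le_trans b1) // (ler_nat R 1 k).
split=> v.
  by rewrite xE; have /andP[y0 y1] := y01 v; rewrite mulr_ge0 //= mulr_ile1.
have -> : x v + \sum_(u | a v u) x u = b / k%:R * (y v + \sum_(u in Nout a v) y u).
  rewrite mulrDr mulr_sumr xE; congr (_ + _).
  by apply: eq_big => [u|u _]; rewrite ?inE ?xE.
by rewrite -[leRHS](@divfK _ k%:R) ?ler_wpM2l ?gt_eqF.
Qed.

Theorem theorem3 (R : realType) (V : finType) (e a : rel V) (k : nat) (b : R) :
  (1 <= k)%N -> simple_graph e -> certifying_orientation e a k ->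
  0 <= b <= 1 ->
  (exists pi : scheme V R,
      balanced_CR e (polyQ a k) (b / k%:R) (1 - b) pi /\
      deterministic_scheme (b / k%:R) (polyQ a k) pi /\
      oblivious_scheme (b / k%:R) (polyQ a k) pi /\
      monotone_scheme (b / k%:R) (polyQ a k) pi) /\
  (exists pi : scheme V R,
      balanced_CR e (polyQ a k) (b / k%:R) (expR (- b)) pi /\
      monotone_scheme (b / k%:R) (polyQ a k) pi).
Proof.
move=> k1 _ [ori _] b01; have a_irr := orientation_irr ori.
have Q0 x : scaleP (b / k%:R) (polyQ a k) x -> forall v, 0 <= x v.
  by move=> /(scaled_polyQ k1 b01)[x01 _] v; case/andP: (x01 v).
pose one (t : R) : R := 1.
have one01 t : 0 < t -> 0 <= one t <= 1 by rewrite /one ler01 lexx.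
split.
  exists (sink_scheme a one); split; last split; last split.
  - apply: (sink_scheme_balanced one01 a_irr ori Q0).
    move=> x i /(scaled_polyQ k1 b01) [x01 xb] _.
    rewrite /one mul1r; under eq_bigr do rewrite mulr1.
    apply: le_trans (one_sub_sum_le_prod _ _ x01).
    rewrite lerD2l lerN2 (le_trans _ (xb i)) // lerDr; by case/andP: (x01 i).
  - exact: sink_scheme1_deterministic.
  - exact: sink_scheme1_oblivious.
  - exact: (sink_scheme_monotone one01 a_irr).
exists (sink_scheme a (@exp_mark R)).
split; last exact: (sink_scheme_monotone (@exp_mark01 R) a_irr).
apply: (sink_scheme_balanced (@exp_mark01 R) a_irr ori Q0).
move=> x i /(scaled_polyQ k1 b01) [_ xb]; rewrite inE => xi0.
under eq_bigr do rewrite mul_exp_mark subKr.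
by rewrite -expR_sum sumrN expR_le_exp_mark.
Qed.
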